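(* With the setting in the context, the ground state subspace $\mathcal H_0$ is spanned by vectors of the form $|f_G\rangle:=\mathcal A_0|f\rangle$ with $f\in\mathrm{hom}(C,G)^0$; moreover, for $f\in\mathrm{hom}(C,G)^0$, one has $\mathcal A_0|f\rangle\in\mathcal H_0$ if and only if $f\in\ker(\delta^0)$.
   Context: $(C_\bullet,\partial^C_\bullet)$ is a chain complex with each $C_n$ free abelian on a finite set $K_n$, $K_n\ne\emptyset$ for finitely many $n$; $(G_\bullet,\partial^G_\bullet)$ is a chain complex of finite abelian groups. $\mathrm{hom}(C,G)^p=\prod_n\mathrm{Hom}(C_n,G_{n-p})$ with $(\delta^pf)_n=f_{n-1}\partial^C_n-(-1)^p\partial^G_{n-p}f_n$. $\mathrm{hom}(C,G)_p=\mathrm{Hom}(\mathrm{hom}(C,G)^p,U(1))$ (written additively), $\chi_m(f)=m(f)$, $\delta_{p+1}m=m\circ\delta^p$. $\mathcal H=\bigotimes_n\bigotimes_{x\in K_n}\mathbb C[G_n]$ with orthonormal basis $|f\rangle$, $f\in\mathrm{hom}(C,G)^0$. $P_t|f\rangle=|f+t\rangle$, $Q_m|f\rangle=\chi_m(f)|f\rangle$; $A_t=P_{\delta^{-1}t}$ ($t\in\mathrm{hom}(C,G)^{-1}$), $B_m=Q_{\delta_1m}$ ($m\in\mathrm{hom}(C,G)_1$). $\mathcal A_0=\frac1{|\mathrm{hom}(C,G)^{-1}|}\sum_{t}A_t$. Local elements: for $x\in K_n$, $g\in G_{n-p}$, $gx^*\in\mathrm{hom}(C,G)^p$ has $n$-th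 component sending $x\mapsto g$ and other basis elements to $0$, other components $0$; for $r\in\mathrm{Hom}(G_{n-p},U(1))$, $rx_*(f)=r(f_n(x))$. $A_x^0=\frac1{|G_{n+1}|}\sum_{h\in G_{n+1}}A_{hx^*}$, $B_x^0=\frac1{|G_{n-1}|}\sum_{r\in\mathrm{Hom}(G_{n-1},U(1))}B_{rx_*}$ for $x\in K_n$; the ground state subspace is $\mathcal H_0=\{\Psi: A_x^0\Psi=B_x^0\Psi=\Psi\ \forall n,\forall x\in K_n\}$. *)

From HB Require Import structures.
From mathcomp Require Import all_boot all_order all_algebra all_field.
From mathcomp Require Import boolp classical_sets fsbigop.
Set Implicit Arguments. Unset Strict Implicit. Unset Printing Implicit Defensive.
Import Order.TTheory GRing.Theory Num.Theory.
Local Open Scope ring_scope.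

(* Cells: X is the disjoint union of the bases K_n, with K_n = {x | deg x = n}
   (so only finitely many K_n are nonempty).  The boundary of C is given by its
   integer matrix: d^C x = \sum_y a x y . y. *)
Section Setting.
Variables (X : finType) (deg : X -> int) (a : X -> X -> int)
  (G : int -> finZmodType) (dG : forall n : int, G n -> G (n - 1)).

(* transport between G m and G n (identity when m = n; only used when m = n) *)
Definition castG (m n : int) (g : G m) : G n :=
  match m =P n with
  | ReflectT e => eq_rect m (fun k => G k) g n e
  | ReflectF _ => 0
  end.

(* hom(C,G)^p = prod_n Hom(C_n, G_{n-p}) = functions x |-> f x in G_{deg x - p} *)
Definition cochain (p : int) := {dffun forall x : X, G (deg x - p)}.

Definition czero (p : int) : cochain p :=
  @finfun X (fun x => G (deg x - p)) (fun x => 0).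
Definition cadd (p : int) (f g : cochain p) : cochain p :=
  @finfun X (fun x => G (deg x - p)) (fun x => f x + g x).
Definition copp (p : int) (f : cochain p) : cochain p :=
  @finfun X (fun x => G (deg x - p)) (fun x => - f x).

(* (delta^p f)_n = f_{n-1} d^C_n - (-1)^p d^G_{n-p} f_n *)
Definition delta (p : int) (f : cochain p) : cochain (p + 1) :=
  @finfun X (fun x => G (deg x - (p + 1))) (fun x =>
    (\sum_(y : X) (@castG (deg y - p) (deg x - (p + 1)) (f y)) *~ a x y)
    - (@castG (deg x - p - 1) (deg x - (p + 1)) (dG (f x))) *~ ((-1) ^ p)).

(* the Hilbert space: vectors are coefficient functions on the basis |f>, f in hom^0 *)
Definition hilb := {ffun cochain 0 -> algC^o}.
Definition ket (f : cochain 0) : hilb := [ffun g => (g == f)%:R].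

(* P_s |f> = |f + s> *)
Definition Pop (s : cochain 0) (psi : hilb) : hilb :=
  [ffun g => psi (cadd g (copp s))].
Definition Qop (mu : cochain 0 -> algC) (psi : hilb) : hilb :=
  [ffun g => mu g * psi g].

Definition Aop (t : cochain (-1)) : hilb -> hilb := Pop (delta t).
(* m in hom(C,G)_1 = Hom(hom^1, U(1)); delta_1 m = m \o delta^0 *)
Definition Bop (m : cochain 1 -> algC) : hilb -> hilb :=
  Qop (fun f => m (delta f)).

Definition A0 (psi : hilb) : hilb :=
  (#|{: cochain (-1)}|%:R)^-1 *: \sum_(t : cochain (-1)) Aop t psi.

Definition elem_up (x : X) (h : G (deg x + 1)) : cochain (-1) :=
  @finfun X (fun y => G (deg y - (-1))) (fun y =>
    if y == x then @castG (deg x + 1) (deg y - (-1)) h else 0).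

Definition elem_low (x : X) (r : {ffun G (deg x - 1) -> algC}) : cochain 1 -> algC :=
  fun f => r (f x).

Definition U1hom (A : zmodType) (r : A -> algC) : Prop :=
  (forall u v, r (u + v) = r u * r v) /\ (forall u, `|r u| = 1).

Definition Ax0 (x : X) (psi : hilb) : hilb :=
  (#|{: G (deg x + 1)}|%:R)^-1 *: \sum_(h : G (deg x + 1)) Aop (elem_up h) psi.

Definition Bx0 (x : X) (psi : hilb) : hilb :=
  (#|{: G (deg x - 1)}|%:R)^-1 *:
    \sum_(r \in [set r : {ffun G (deg x - 1) -> algC} | U1hom r]%classic)
      Bop (elem_low r) psi.

Definition in_H0 (psi : hilb) : Prop :=
  forall x : X, Ax0 x psi = psi /\ Bx0 x psi = psi.

End Setting.

From Pilot Require Import Defs.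
From HB Require Import structures.
From mathcomp Require Import all_boot all_order all_algebra all_field.
From mathcomp Require Import all_fingroup all_character.
From mathcomp Require Import boolp classical_sets fsbigop.
From mathcomp Require Import zify.
Import Order.TTheory GRing.Theory Num.Theory.
Local Open Scope ring_scope.

(* As hom^{-1} is generated
   by the local elements h x^*, a vector is fixed by every A_x^0 iff it is fixed
   by A0.  By the orthogonality relations for the characters of the finite
   abelian groups G_{n-1}, B_x^0 multiplies |g> by [(δg)(x) = 0], so a vector is
   fixed by every B_x^0 iff it is supported on ker δ^0.  Hence H0 consists of the
   A0-fixed vectors supported on ker δ^0, and such a ψ equals
   A0 ψ = Σ_f ψ(f) A0|f>.  Finally A0|f> is supported on f + im δ^{-1}, which
   lies in ker δ^0 iff δf = 0 because δδ = 0: δ^p f = f∂^C - (-1)^p ∂^G f, where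
   both parts square to zero and commute, and the signs at p and p+1 are
   opposite. *)

Section Cochains.
Variables (X : finType) (deg : X -> int) (G : int -> finZmodType) (p : int).

Lemma caddA : associative (@cadd X deg G p).
Proof. by move=> f g h; apply/ffunP => x; rewrite !ffunE addrA. Qed.
Lemma caddC : commutative (@cadd X deg G p).
Proof. by move=> f g; apply/ffunP => x; rewrite !ffunE; apply: addrC. Qed.
Lemma cadd0 : left_id (czero deg G p) (@cadd X deg G p).
Proof. by move=> f; apply/ffunP => x; rewrite !ffunE add0r. Qed.
Lemma caddN : left_inverse (czero deg G p) (@copp X deg G p) (@cadd X deg G p).
Proof. by move=> f; apply/ffunP => x; rewrite !ffunE addNr. Qed.

HB.instance Definition _ := Finite.on (cochain deg G p).
HB.instance Definition _ :=
  GRing.isZmodule.Build (cochain deg G p) caddA caddC cadd0 caddN.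

Lemma cochainD (f g : cochain deg G p) x : (f + g) x = f x + g x.
Proof. exact: ffunE. Qed.
Lemma cochainN (f : cochain deg G p) x : (- f) x = - f x.
Proof. exact: ffunE. Qed.
Lemma cochain0 x : (0 : cochain deg G p) x = 0.
Proof. exact: ffunE. Qed.

Lemma cochain_sum (I : Type) (r : seq I) (P : pred I) (F : I -> cochain deg G p) x :
  (\sum_(i <- r | P i) F i) x = \sum_(i <- r | P i) F i x.
Proof. by elim/big_rec2: _ => [|i y1 y2 _ <-]; rewrite ?cochain0 ?cochainD. Qed.

Lemma cochainMn (f : cochain deg G p) n x : (f *+ n) x = f x *+ n.
Proof. by elim: n => [|n IH]; rewrite ?cochain0 // !mulrS cochainD IH. Qed.

Lemma cochainMz (f : cochain deg G p) z x : (f *~ z) x = f x *~ z.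
Proof. by case: z => n; rewrite /intmul ?cochainN cochainMn. Qed.

End Cochains.

Section Cast.
Variable G : int -> finZmodType.

Lemma castG_id m (g : G m) : castG m g = g.
Proof. by rewrite /castG; case: eqP => // e; rewrite (eq_axiomK e). Qed.

Lemma castG_neq m n (g : G m) : m != n -> castG n g = 0.
Proof. by rewrite /castG; case: eqP. Qed.

Lemma castG_is_zmod_morphism m n : zmod_morphism (@castG G m n).
Proof.
move=> u v; have [e|ne] := eqVneq m n; first by case: n / e; rewrite !castG_id.
by rewrite !castG_neq // subr0.
Qed.
HB.instance Definition _ m n :=
  GRing.isZmodMorphism.Build (G m) (G n) (@castG G m n) (@castG_is_zmod_morphism m n).

Lemma castG_comp_inner k m n (g : G k) : k = m -> castG n (castG m g) = castG n g.
Proof. by move=> e; case: m / e; rewrite castG_id. Qed.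

Lemma castG_comp_outer k m n (g : G k) : m = n -> castG n (castG m g) = castG n g.
Proof. by move=> e; case: n / e; rewrite castG_id. Qed.

End Cast.

Lemma natr_card_neq0 {T : finType} (t0 : T) : (#|T|%:R : algC) != 0.
Proof. by rewrite pnatr_eq0 -lt0n; apply/card_gt0P; exists t0. Qed.

Lemma sum_mul_hom_eq0 (M : finZmodType) (R : idomainType) (phi : M -> R) w :
  (forall u v, phi (u + v) = phi u * phi v) -> phi w != 1 -> \sum_u phi u = 0.
Proof.
move=> phiD phiw; have : \sum_u phi u = phi w * \sum_u phi u.
  rewrite mulr_sumr (reindex_inj (addIr w)) /=.
  by apply: eq_bigr => u _; rewrite phiD mulrC.
move/eqP; rewrite -subr_eq0 -{1}[\sum_u _]mul1r -mulrBl mulf_eq0 subr_eq0.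
by rewrite eq_sym (negbTE phiw) => /eqP.
Qed.

Lemma U1hom0 {M : zmodType} {r : M -> algC} : U1hom r -> r 0 = 1.
Proof.
move=> [rD r1]; apply: (mulfI (x := r 0)).
  by rewrite -normr_eq0 r1 oner_neq0.
by rewrite -rD addr0 mulr1.
Qed.

Section Characters.
Variable M : finZmodType.
Let gT : finGroupType := M.

Lemma abelian_zmod : abelian [set: gT].
Proof. by apply/centsP => u _ v _; apply: addrC. Qed.

Lemma irr_lin_char (i : Iirr [set: gT]) : 'chi_i \is a linear_char.
Proof. by move/char_abelianP: abelian_zmod. Qed.

Definition irr_fun (i : Iirr [set: gT]) : {ffun M -> algC} := [ffun u => 'chi_i u].

Lemma irr_funD i (u v : M) : irr_fun i (u + v) = irr_fun i u * irr_fun i v.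
Proof. by rewrite !ffunE (lin_charM (irr_lin_char i)) ?inE. Qed.

Lemma U1hom_irr_fun i : U1hom (irr_fun i).
Proof.
split; first exact: irr_funD.
by move=> u; rewrite ffunE (normC_lin_char (irr_lin_char i)) ?inE.
Qed.

Lemma irr_fun_inj : injective irr_fun.
Proof.
move=> i j /ffunP eq_ij; apply: irr_inj; apply/cfunP => u.
by have := eq_ij u; rewrite !ffunE.
Qed.

Lemma sum_irr_fun (u : M) : \sum_i irr_fun i u = #|M|%:R *+ (u == 0).
Proof.
transitivity (\sum_(i : Iirr [set: gT]) 'chi_i (u : gT) * ('chi_i 1%g)^*).
  by apply: eq_bigr => i _; rewrite ffunE (lin_char1 (irr_lin_char i)) conjC1 mulr1.
rewrite second_orthogonality_relation ?inE //.
have -> : ('C_[set: gT][u])%g = [set: gT].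
  apply/setP => v; rewrite !inE conjg_set1 conjgE.
  have -> : (v^-1 * (u * v))%g = u by change (- v + (u + v) = u :> M); rewrite addrC addrK.
  by rewrite subxx.
by rewrite cardsT class1G inE.
Qed.

(* If r differed from every 'chi_i it would be orthogonal to all of them, and
   summing these orthogonality relations over i gives #|M| * r 0 = 0. *)
Lemma U1hom_irr_funP (r : {ffun M -> algC}) : U1hom r -> exists i, r = irr_fun i.
Proof.
move=> U1r; apply: contrapT => /forallNP r_not_irr.
have orth i : \sum_u r u * (irr_fun i u)^* = 0.
  have /existsNP[w /eqP rw] : ~ (forall w, r w = irr_fun i w).
    by move/ffunP; exact: r_not_irr.
  apply: (@sum_mul_hom_eq0 _ _ _ w) => [u v|].
    by rewrite U1r.1 irr_funD rmorphM mulrACA.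
  apply: contra rw => /eqP rw1; apply/eqP.
  have chi_unit : irr_fun i w * (irr_fun i w)^* = 1.
    by rewrite -normCK (U1hom_irr_fun i).2 expr1n.
  by rewrite -[r w]mulr1 -chi_unit mulrCA rw1 mulr1.
have : \sum_i \sum_u r u * (irr_fun i u)^* = 0 by rewrite big1.
rewrite exchange_big /=.
under eq_bigr do rewrite -mulr_sumr -rmorph_sum /= sum_irr_fun.
rewrite (bigD1 0) //= big1 => [|u /negbTE ->]; last by rewrite mulr0n conjC0 mulr0.
rewrite addr0 eqxx mulr1n conjC_nat (U1hom0 U1r) mul1r => /eqP.
by rewrite (negbTE (natr_card_neq0 0)).
Qed.

(* Hence the index set of the finitely supported sum in Bx0 is finite, so that
   sum is not the junk value 0. *)
Lemma fsbig_U1hom (V : zmodType) (F : {ffun M -> algC} -> V) :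
  \sum_(r \in [set r : {ffun M -> algC} | U1hom r]%classic) F r =
  \sum_(i : Iirr [set: gT]) F (irr_fun i).
Proof.
rewrite (fsbigE (map irr_fun (enum (Iirr [set: gT])))).
- rewrite big_map big_enum_cond /=; apply: eq_bigl => i.
  by apply/idP; rewrite in_setE; exact: U1hom_irr_fun.
- by rewrite map_inj_uniq ?enum_uniq //; exact: irr_fun_inj.
- by move=> r /mapP [i _ ->]; exact: U1hom_irr_fun.
- move=> r /U1hom_irr_funP [i ->] /negP []; apply/mapP; exists i => //.
  by rewrite mem_enum.
Qed.

End Characters.

Section GroundStates.
Variables (X : finType) (deg : X -> int) (a : X -> X -> int).
Hypothesis ha : forall x y, a x y != 0 -> deg y = deg x - 1.
Hypothesis haa : forall x z, \sum_(y : X) a x y * a y z = 0.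
Variables (G : int -> finZmodType) (dG : forall n : int, G n -> G (n - 1)).
Hypothesis dG_add : forall n : int, {morph dG n : u v / u + v}.
Hypothesis dGdG : forall (n : int) (g : G n), dG (n - 1) (dG n g) = 0.
Local Notation coch p := (cochain deg G p).
Local Notation δ := (delta a dG).

Lemma dG_is_zmod_morphism n : zmod_morphism (dG n).
Proof. by move=> u v; apply: (addIr (dG n v)); rewrite -dG_add !subrK. Qed.
HB.instance Definition _ n :=
  GRing.isZmodMorphism.Build (G n) (G (n - 1)) (dG n) (dG_is_zmod_morphism n).

Lemma castG_dG m n (g : G m) : castG (n - 1) (dG m g) = dG n (castG n g).
Proof.
have [e|ne] := eqVneq m n; first by case: n / e; rewrite !castG_id.
by rewrite !castG_neq ?raddf0 //; apply: contra ne => /eqP e; apply/eqP; lia.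
Qed.

Definition comp_dC {p} (f : coch p) : coch (p + 1) :=
  @finfun X (fun x => G (deg x - (p + 1))) (fun x =>
    \sum_(y : X) castG (deg x - (p + 1)) (f y) *~ a x y).

Definition comp_dG {p} (f : coch p) : coch (p + 1) :=
  @finfun X (fun x => G (deg x - (p + 1))) (fun x =>
    castG (deg x - (p + 1)) (dG _ (f x))).

Lemma comp_dC_is_zmod_morphism p : zmod_morphism (@comp_dC p).
Proof.
move=> f g; apply/ffunP => x; rewrite cochainD cochainN !ffunE -sumrB.
by apply: eq_bigr => y _; rewrite cochainD cochainN raddfB mulrzBl.
Qed.
HB.instance Definition _ p := GRing.isZmodMorphism.Build (coch p) (coch (p + 1))
  (@comp_dC p) (@comp_dC_is_zmod_morphism p).

Lemma comp_dG_is_zmod_morphism p : zmod_morphism (@comp_dG p).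
Proof.
by move=> f g; apply/ffunP => x; rewrite !(cochainD, cochainN, ffunE) !raddfB.
Qed.
HB.instance Definition _ p := GRing.isZmodMorphism.Build (coch p) (coch (p + 1))
  (@comp_dG p) (@comp_dG_is_zmod_morphism p).

Lemma deltaE p (f : coch p) : δ f = comp_dC f - comp_dG f *~ (-1) ^ p.
Proof. by apply/ffunP => x; rewrite cochainD cochainN cochainMz !ffunE. Qed.

Lemma comp_dC2 p (f : coch p) : comp_dC (comp_dC f) = 0.
Proof.
apply/ffunP => x; rewrite cochain0 ffunE.
under eq_bigr do rewrite ffunE raddf_sum mulrz_suml.
rewrite exchange_big big1 // => z _.
transitivity (\sum_y castG (deg x - (p + 1 + 1)) (f z) *~ (a x y * a y z)).
  apply: eq_bigr => y _; have [->|ayz] := eqVneq (a y z) 0.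
    by rewrite mulr0 !mulr0z raddf0 mul0rz.
  rewrite raddfMz /= castG_comp_inner; last by have := ha y z ayz; lia.
  by rewrite mulrC mulrzA.
by rewrite -mulrz_sumr haa mulr0z.
Qed.

Lemma comp_dG2 p (f : coch p) : comp_dG (comp_dG f) = 0.
Proof. by apply/ffunP => x; rewrite cochain0 !ffunE -castG_dG dGdG !raddf0. Qed.

Lemma comp_dC_dG p (f : coch p) : comp_dC (comp_dG f) = comp_dG (comp_dC f).
Proof.
apply/ffunP => x; rewrite !ffunE raddf_sum raddf_sum; apply: eq_bigr => y _.
rewrite ffunE !raddfMz /= -castG_dG castG_comp_inner; last lia.
by rewrite castG_comp_outer //; lia.
Qed.

Lemma delta_is_zmod_morphism p : zmod_morphism (@delta X deg a G dG p).
Proof.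
move=> f g; rewrite !deltaE (raddfB (@comp_dC p)) (raddfB (@comp_dG p)) /=.
by rewrite mulrzBl !opprD !opprK addrACA.
Qed.
HB.instance Definition _ p := GRing.isZmodMorphism.Build (coch p) (coch (p + 1))
  (@delta X deg a G dG p) (@delta_is_zmod_morphism p).

Lemma delta_delta p (f : coch p) : δ (δ f) = 0.
Proof.
rewrite [δ f]deltaE deltaE !raddfB !raddfMz /= comp_dC2 comp_dG2 comp_dC_dG.
rewrite exprzDr ?unitrN1 // expr1z mulrN1 mulrNz.
by rewrite oppr0 mul0rz addr0 add0r subrr.
Qed.

Local Notation hil := (hilb deg G).
Local Notation Aop := (Aop a dG).
Local Notation A0 := (A0 a dG).

Lemma PopE (s : coch 0) (psi : hil) (g : coch 0) : Pop s psi g = psi (g - s).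
Proof. exact: ffunE. Qed.

Lemma Pop_is_linear (s : coch 0) : linear (Pop s).
Proof. by move=> k u v; apply/ffunP => g; rewrite !(PopE, ffunE). Qed.
HB.instance Definition _ s := GRing.isLinear.Build algC hil hil *:%R (Pop s)
  (Pop_is_linear s).

Lemma PopD (s s' : coch 0) (psi : hil) : Pop s (Pop s' psi) = Pop (s + s') psi.
Proof. by apply/ffunP => g; rewrite !PopE opprD addrA. Qed.

Lemma Pop0 (psi : hil) : Pop 0 psi = psi.
Proof. by apply/ffunP => g; rewrite PopE subr0. Qed.

HB.instance Definition _ t := GRing.isLinear.Build algC hil hil *:%R (Aop t)
  (Pop_is_linear (δ t)).

Lemma AopD (t t' : coch (-1)) (psi : hil) : Aop t (Aop t' psi) = Aop (t + t') psi.
Proof. by rewrite /Defs.Aop PopD raddfD. Qed.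

Lemma Aop0 (psi : hil) : Aop 0 psi = psi.
Proof. by rewrite /Defs.Aop raddf0 Pop0. Qed.

(* A0 is the average for e = idfun, and Ax0 x the one for e = elem_up. *)
Section Average.
Variables (I : finZmodType) (e : {additive I -> coch (-1)}).

Definition average (psi : hil) : hil :=
  (#|{: I}|%:R)^-1 *: \sum_(i : I) Aop (e i) psi.

Lemma Aop_average j psi : Aop (e j) (average psi) = average psi.
Proof.
rewrite /average linearZ linear_sum /=; congr (_ *: _).
rewrite [RHS](reindex_inj (addrI j)) /=.
by apply: eq_bigr => i _; rewrite AopD raddfD.
Qed.

Lemma average_id psi : (forall i, Aop (e i) psi = psi) -> average psi = psi.
Proof.
move=> fix_psi; rewrite /average; under eq_bigr do rewrite fix_psi.
by rewrite sumr_const -scaler_nat scalerA mulVf ?scale1r //; exact: natr_card_neq0 0.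
Qed.

End Average.

Lemma elem_up_is_zmod_morphism x : zmod_morphism (@elem_up X deg G x).
Proof.
move=> h h'; apply/ffunP => y; rewrite !(cochainD, cochainN, ffunE).
by case: eqP => _; rewrite ?raddfB ?subr0.
Qed.
HB.instance Definition _ x := GRing.isZmodMorphism.Build _ _ (@elem_up X deg G x)
  (elem_up_is_zmod_morphism x).

Lemma cochain_sum_elem_up (t : coch (-1)) :
  t = \sum_(x : X) elem_up (castG (deg x + 1) (t x)).
Proof.
apply/ffunP => y; rewrite cochain_sum (bigD1 y) //= big1 => [|x /negbTE yx].
  by rewrite ffunE eqxx castG_comp_inner ?castG_id ?addr0 //; lia.
by rewrite ffunE eq_sym yx.
Qed.

Lemma Aop_A0 (t : coch (-1)) (psi : hil) : Aop t (A0 psi) = A0 psi.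
Proof. exact: (Aop_average _ idfun t psi). Qed.

Lemma A0_id (psi : hil) : (forall t, Aop t psi = psi) -> A0 psi = psi.
Proof. exact: (average_id _ idfun). Qed.

Lemma A0_idem (psi : hil) : A0 (A0 psi) = A0 psi.
Proof. by apply: A0_id => t; apply: Aop_A0. Qed.

Lemma Ax0_A0 x (psi : hil) : Ax0 a dG x (A0 psi) = A0 psi.
Proof. by apply: (average_id _ (@elem_up X deg G x)) => h; apply: Aop_A0. Qed.

Lemma Ax0_fixed_Aop_elem_up x (psi : hil) :
  Ax0 a dG x psi = psi -> forall h : G (deg x + 1), Aop (elem_up h) psi = psi.
Proof.
by move=> psi_fixed h; rewrite -psi_fixed; apply: (Aop_average _ (@elem_up X deg G x)).
Qed.

Lemma Aop_fixed_of_elem_up (psi : hil) :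
  (forall x (h : G (deg x + 1)), Aop (elem_up h) psi = psi) -> forall t, Aop t psi = psi.
Proof.
move=> psi_fixed t; rewrite (cochain_sum_elem_up t).
by elim/big_rec: _ => [|x t' _ IH]; rewrite ?Aop0 // -AopD IH.
Qed.

Lemma Ax0_fixedP (psi : hil) : (forall x, Ax0 a dG x psi = psi) <-> A0 psi = psi.
Proof.
split=> [psi_fixed | <- x]; last exact: Ax0_A0.
by apply/A0_id/Aop_fixed_of_elem_up => x; apply/Ax0_fixed_Aop_elem_up/psi_fixed.
Qed.

Lemma Bx0E x (psi : hil) :
  Bx0 a dG x psi = [ffun g => ((δ g x == 0)%:R : algC) * psi g].
Proof.
rewrite /Bx0 fsbig_U1hom; apply/ffunP => g; rewrite [RHS]ffunE [LHS]ffunE sum_ffunE.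
under eq_bigr do rewrite ffunE.
rewrite -mulr_suml sum_irr_fun -[_ *: _]/(_ * _) mulrA.
case: (δ g x == 0); last by rewrite mulr0n mulr0 !mul0r.
by rewrite mulr1n mulVf ?mul1r //; apply: natr_card_neq0 0.
Qed.

Lemma Bx0_fixedP x (psi : hil) :
  Bx0 a dG x psi = psi <-> forall g, psi g != 0 -> δ g x = 0.
Proof.
rewrite Bx0E; split=> [/ffunP psi_fixed g | supp].
  by have := psi_fixed g; rewrite ffunE; case: eqP => // _ <-; rewrite mul0r eqxx.
apply/ffunP => g; rewrite ffunE.
by have [->|/supp->] := eqVneq (psi g) 0; rewrite ?mulr0 ?eqxx ?mul1r.
Qed.

Lemma in_H0P (psi : hil) :
  in_H0 a dG psi <-> A0 psi = psi /\ forall g, psi g != 0 -> δ g = 0.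
Proof.
rewrite -Ax0_fixedP; split=> [H0psi | [A_fixed supp] x].
  split=> [x | g nz]; first exact: (H0psi x).1.
  apply/ffunP => x; rewrite cochain0.
  by apply: (Bx0_fixedP x psi).1 nz; apply: (H0psi x).2.
split; first exact: A_fixed.
by apply/Bx0_fixedP => g /supp ->; rewrite cochain0.
Qed.

Lemma A0_is_linear : linear (A0 : hil -> hil).
Proof.
move=> k u v; rewrite /Defs.A0; under eq_bigr do rewrite linearP.
by rewrite big_split /= -scaler_sumr scalerDr !scalerA mulrC.
Qed.
HB.instance Definition _ := GRing.isLinear.Build algC hil hil *:%R A0 A0_is_linear.

Lemma A0E (psi : hil) (g : coch 0) :
  A0 psi g = (#|{: coch (-1)}|%:R)^-1 * \sum_(t : coch (-1)) psi (g - δ t).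
Proof.
rewrite /Defs.A0 ffunE sum_ffunE; congr (_ * _).
by apply: eq_bigr => t _; rewrite PopE.
Qed.

Lemma A0_ket_neq0 (f : coch 0) : A0 (ket f) f != 0.
Proof.
rewrite A0E mulf_eq0 negb_or invr_eq0 (natr_card_neq0 0) /=.
under eq_bigr do rewrite ffunE.
rewrite -natr_sum pnatr_eq0 (bigD1 0) //=.
by rewrite (raddf0 (@delta X deg a G dG (-1))) subr0 eqxx.
Qed.

Lemma A0_ket_support (f g : coch 0) :
  A0 (ket f) g != 0 -> exists t : coch (-1), g = f + δ t.
Proof.
rewrite A0E => /eqP nz; apply: contrapT => /forallNP no_t; apply: nz.
rewrite big1 ?mulr0 // => t _; rewrite ffunE; case: eqP => // gt.
by case: (no_t t); rewrite -gt subrK.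
Qed.

Lemma in_H0_A0_ketP (f : coch 0) : in_H0 a dG (A0 (ket f)) <-> δ f = 0.
Proof.
rewrite in_H0P; split=> [[_ supp] | δf0]; first exact/supp/A0_ket_neq0.
split=> [|g /A0_ket_support [t ->]]; first exact: A0_idem.
by rewrite raddfD /= δf0 (delta_delta (-1) t); apply: addr0.
Qed.

Lemma ket_decomp (psi : hil) : psi = \sum_(f : coch 0) psi f *: ket f.
Proof.
apply/ffunP => g; rewrite sum_ffunE (bigD1 g) //= big1 => [|f /negbTE fg].
  by rewrite !ffunE eqxx addr0; apply: esym (mulr1 _).
by rewrite !ffunE eq_sym fg; apply: mulr0.
Qed.

Lemma in_H0_lincomb (I : finType) (c : I -> algC) (v : I -> hil) :
  (forall i, c i != 0 -> in_H0 a dG (v i)) -> in_H0 a dG (\sum_i c i *: v i).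
Proof.
move=> H0v; apply/in_H0P; split.
  rewrite linear_sum; apply: eq_bigr => i _; rewrite linearZ /=.
  by have [->|/H0v/in_H0P[->]] := eqVneq (c i) 0; rewrite ?scale0r.
move=> g; rewrite sum_ffunE => /eqP nz; apply: contrapT => δg_neq0; apply: nz.
apply: big1 => i _; rewrite ffunE.
have [->|/H0v/in_H0P[_ supp]] := eqVneq (c i) 0; first by rewrite scale0r.
by have [->|/supp/δg_neq0] := eqVneq (v i g) 0; first rewrite scaler0.
Qed.

Lemma H0_spanned_by_A0_kets (psi : hil) :
  in_H0 a dG psi <->
  exists c : coch 0 -> algC,
    (forall f, c f != 0 -> in_H0 a dG (A0 (ket f))) /\
    psi = \sum_(f : coch 0) c f *: A0 (ket f).
Proof.
split=> [H0psi | [c [H0c ->]]]; last exact: in_H0_lincomb.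
have [A0psi supp] := (in_H0P psi).1 H0psi.
exists (fun f => psi f); split=> [f /supp /in_H0_A0_ketP // |].
rewrite -{1}A0psi {1}(ket_decomp psi) linear_sum.
by apply: eq_bigr => f _; rewrite linearZ.
Qed.

End GroundStates.

Theorem proposition4 (X : finType) (deg : X -> int) (a : X -> X -> int)
  (ha : forall x y, a x y != 0 -> deg y = deg x - 1)
  (haa : forall x z, \sum_(y : X) a x y * a y z = 0)
  (G : int -> finZmodType) (dG : forall n : int, G n -> G (n - 1))
  (dG_add : forall n : int, {morph dG n : u v / u + v})
  (dGdG : forall (n : int) (g : G n), dG (n - 1) (dG n g) = 0) :
  (forall psi : hilb deg G,
     in_H0 a dG psi <->
     exists c : cochain deg G 0 -> algC,
       (forall f, c f != 0 -> in_H0 a dG (A0 a dG (ket f))) /\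
       psi = \sum_(f : cochain deg G 0) c f *: A0 a dG (ket f))
  /\
  (forall f : cochain deg G 0,
     in_H0 a dG (A0 a dG (ket f)) <-> delta a dG f = czero deg G (0 + 1)).
Proof.
split=> [psi | f]; [apply: H0_spanned_by_A0_kets | apply: in_H0_A0_ketP] => //.
Qed.
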